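(* Let $I,J\ge 2$ and let $m_A=(m_{A,1},\dots,m_{A,I})$, $m_B=(m_{B,1},\dots,m_{B,J})$ be vectors of positive integers with $\sum_i m_{A,i}=\sum_j m_{B,j}=I+J-1$. Then the number of saturated fractions $\mathcal F\subseteq[I]\times[J]$ with margins $m_A$ and $m_B$ is $$\binom{I-1}{m_{B,1}-1,\ \dots,\ m_{B,J}-1}\binom{J-1}{m_{A,1}-1,\ \dots,\ m_{A,I}-1},$$ where $\binom{n}{k_1,\dots,k_r}=\frac{n!}{k_1!\cdots k_r!}$ denotes the multinomial coefficient.
   Context: For a fraction $\mathcal F\subseteq[I]\times[J]$, its margins are $m_{A,i}=\#\{(d_1,d_2)\in\mathcal F: d_1=i\}$ and $m_{B,j}=\#\{(d_1,d_2)\in\mathcal F: d_2=j\}$. For $(i,j)\in[I]\times[J]$ let $r_{(i,j)}\in\mathbb R^{I+J-1}$ be the row vector $(1,a_1,\dots,a_{I-1},b_1,\dots,b_{J-1})$ with $a_s=1$ iff $s=i$ and $b_t=1$ iff $t=j$ (all other entries $0$); $X_{\mathcal F}$ is the matrix with rows $r_{(i,j)}$, $(i,j)\in\mathcal F$. $\mathcal F$ is saturated if $\#\mathcal F=I+J-1$ and $X_{\mathcal F}$ is non-singular. *)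

From HB Require Import structures.
From mathcomp Require Import all_boot all_order all_algebra.
Set Implicit Arguments. Unset Strict Implicit. Unset Printing Implicit Defensive.
Import Order.TTheory GRing.Theory Num.Theory.

Local Open Scope ring_scope.

(* Indices are 0-based: paper's level i in [I] is the ordinal i : 'I_I with
   value i-1.  The row vector r_(i,j) in R^(I+J-1) (0-based positions):
   position 0 holds 1; position s (1 <= s <= I-1) holds a_s = [s = i_paper];
   position I-1+t (1 <= t <= J-1) holds b_t = [t = j_paper]. *)
Definition design_row (I J : nat) (i : 'I_I) (j : 'I_J) : 'rV[rat]_(I + J - 1) :=
  \row_(k < I + J - 1)
    (if val k == 0%N then 1
     else if (val k < I)%N then ((val k == i.+1)%N)%:R
     else ((val k == I + j)%N)%:R).

(* It is only used when #F = I+J-1, in which case it is exactly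
   the square matrix X_F (row order is irrelevant for non-singularity). *)
Definition design_matrix (I J : nat) (F : {set 'I_I * 'I_J}) :
    'M[rat]_(I + J - 1) :=
  \matrix_(k < I + J - 1, l < I + J - 1)
     (nth 0 [seq design_row p.1 p.2 | p <- enum F] k) 0 l.

Definition saturated (I J : nat) (F : {set 'I_I * 'I_J}) : bool :=
  (#|F| == I + J - 1)%N && (design_matrix F \in unitmx).

Definition marginA (I J : nat) (F : {set 'I_I * 'I_J}) (i : 'I_I) : nat :=
  #|[set p in F | p.1 == i]|.
Definition marginB (I J : nat) (F : {set 'I_I * 'I_J}) (j : 'I_J) : nat :=
  #|[set p in F | p.2 == j]|.

Definition multinomial (n : nat) (ks : seq nat) : nat :=
  (n`! %/ \prod_(k <- ks) k`!)%N.

(* A fraction F ⊆ [I]×[J] is read as the edge set of a bipartite graph on the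
   rows [I] and the columns [J]; its margins are the vertex degrees.

   Write v ↦ r_(i,j) v as  rowpart v i + colpart v j, where
      (rowpart, colpart) determines v and ranges over all pairs whose column
      part vanishes at the last column.  A kernel vector of X_F therefore
      gives a row/column labelling constant along edges (up to sign), which is
      zero on a connected graph; conversely a nontrivial closed pair (A, B)
      of a disconnected graph gives a nonzero kernel vector.  Hence, when
      #F = I + J - 1, F is saturated iff its graph is connected, i.e. a
      spanning tree of K_{I,J}.
   2. Counting trees.  If N(R, C) counts the connected F ⊆ R × C with degrees
      dA, dB summing to |R| + |C| - 1, then
          N(R, C) ∏_R (dA i - 1)! ∏_C (dB j - 1)! = (|C| - 1)! (|R| - 1)!.
      By induction on |R| + |C|: some vertex is a leaf; deleting it lowers the
      degree of its neighbour j by one, and summing over j gives the formula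
      (rows and columns being exchanged by transposition).
   3. The theorem is this identity for R = [I], C = [J], divided by the
      factorial products. *)

From mathcomp Require Import all_boot all_order all_algebra.
From mathcomp Require Import zify ring.
Set Implicit Arguments. Unset Strict Implicit. Unset Printing Implicit Defensive.
Import GRing.Theory.

(* The pair (A, B) of row and column sets is closed for F when no edge of F
   joins A ∪ B to its complement. *)
Definition closed_pair (I J : nat) (F : {set 'I_I * 'I_J})
    (A : {set 'I_I}) (B : {set 'I_J}) : bool :=
  [forall p in F, (p.1 \in A) == (p.2 \in B)].

Definition connected_on (I J : nat) (R : {set 'I_I}) (C : {set 'I_J})
    (F : {set 'I_I * 'I_J}) : bool :=
  [forall A : {set 'I_I}, forall B : {set 'I_J},
     [&& A \subset R, B \subset C & closed_pair F A B] ==>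
     ((A == set0) && (B == set0)) || ((A == R) && (B == C))].


Lemma unitmx_ker (R : fieldType) m (A : 'M[R]_m) :
  (A \in unitmx) <-> (forall v : 'cV_m, A *m v = 0 -> v = 0)%R.
Proof.
split => [Au v Av|h]; first by rewrite -(mulKmx Au v) Av mulmx0.
rewrite unitmxE unitfE -det_tr; apply/negP => /det0P[w w0 wA].
have : (A *m w^T = 0)%R by rewrite -(trmxK A) -trmx_mul wA trmx0.
by move/h/(congr1 trmx); rewrite trmxK trmx0 => w_eq0; rewrite w_eq0 eqxx in w0.
Qed.

Section DesignMatrix.
Variables (I J : nat).
Hypotheses (I_gt0 : (0 < I)%N) (J_gt0 : (0 < J)%N).
Local Notation n := (I + J - 1)%N.
Local Open Scope ring_scope.

Lemma last_row_subproof : (I.-1 < I)%N. Proof. by rewrite ltn_predL. Qed.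
Lemma last_col_subproof : (J.-1 < J)%N. Proof. by rewrite ltn_predL. Qed.
Definition last_row : 'I_I := Ordinal last_row_subproof.
Definition last_col : 'I_J := Ordinal last_col_subproof.

(* Coordinate l of v, read as 0 outside the index range. *)
Definition vcoef (v : 'cV[rat]_n) (l : nat) : rat :=
  \sum_(k < n) (val k == l)%:R * v k 0.

Lemma vcoef_ord v (k : 'I_n) : vcoef v k = v k 0.
Proof.
rewrite /vcoef (bigD1 k) //= eqxx mul1r big1 ?addr0 // => k' /negbTE.
by rewrite -(inj_eq val_inj) => ->; rewrite mul0r.
Qed.

Lemma vcoef_out v l : (n <= l)%N -> vcoef v l = 0.
Proof.
move=> nl; rewrite /vcoef big1 // => k _.
by rewrite ltn_eqF ?mul0r // (leq_trans (ltn_ord k) nl).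
Qed.

Lemma vcoef_col (f : nat -> rat) l :
  vcoef (\col_(k < n) f k) l = if (l < n)%N then f l else 0.
Proof.
case: ltnP => ln; last exact: vcoef_out.
by rewrite (vcoef_ord _ (Ordinal ln)) mxE.
Qed.

(* The design row r_(i,j) evaluates a vector v as rowpart v i + colpart v j:
   coordinate 0 and a_i contribute to the row part, b_j to the column part. *)
Definition rowpart (v : 'cV[rat]_n) (i : 'I_I) : rat :=
  vcoef v 0 + (i.+1 < I)%N%:R * vcoef v i.+1.
Definition colpart (v : 'cV[rat]_n) (j : 'I_J) : rat := vcoef v (I + j).

Lemma design_row_entry (i : 'I_I) (j : 'I_J) (k : 'I_n) :
  design_row i j 0 k = (val k == 0%N)%:R + (i.+1 < I)%N%:R * (val k == i.+1)%:R
                       + (val k == I + j)%N%:R.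
Proof.
rewrite mxE; have [k0|k_gt0] := eqVneq (val k) 0%N.
  by rewrite k0 /= eq_sym addn_eq0 (gtn_eqF I_gt0) mulr0 !addr0.
rewrite add0r; have [kI|Ik] := ltnP (val k) I.
  rewrite (ltn_eqF (leq_trans kI (leq_addr j I))) addr0.
  by have [ki|_] := eqVneq (val k) i.+1; rewrite ?mulr0 // -ki kI mulr1.
have [ki|_] := eqVneq (val k) i.+1; last by rewrite mulr0 add0r.
by move: Ik; rewrite ki => /leq_gtF ->; rewrite mul0r add0r.
Qed.

Lemma design_row_mul (v : 'cV[rat]_n) (i : 'I_I) (j : 'I_J) :
  (design_row i j *m v) 0 0 = rowpart v i + colpart v j.
Proof.
rewrite mxE /rowpart /colpart /vcoef mulr_sumr -!big_split /=.
by apply: eq_bigr => k _; rewrite design_row_entry !mulrDl mulrA.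
Qed.

(* The last column has no b-coordinate. *)
Lemma colpart_last v : colpart v last_col = 0.
Proof. by rewrite /colpart vcoef_out //= -subn1 addnBA. Qed.

Lemma rowcolpart_eq0 v : (forall i, rowpart v i = 0) -> (forall j, colpart v j = 0) -> v = 0.
Proof.
move=> row0 col0; have v0 : vcoef v 0 = 0.
  by have := row0 last_row; rewrite /rowpart /= prednK // ltnn mul0r addr0.
apply/matrixP => k z; rewrite ord1 mxE -vcoef_ord.
have [->//|k_gt0] := posnP k; have [kI|Ik] := ltnP k I.
  have := row0 (Ordinal (leq_ltn_trans (leq_pred k) kI)).
  by rewrite /rowpart /= prednK // kI mul1r v0 add0r.
have kJ : (k - I < J)%N by have := ltn_ord k; lia.
by have := col0 (Ordinal kJ); rewrite /colpart /= subnKC.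
Qed.

Lemma rowcolpart_surj (a : 'I_I -> rat) (b : 'I_J -> rat) : b last_col = 0 ->
  exists v, (forall i, rowpart v i = a i) /\ (forall j, colpart v j = b j).
Proof.
move=> b_last.
pose f l := if l == 0%N then a last_row
            else if (l < I)%N then a (insubd last_row l.-1) - a last_row
            else b (insubd last_col (l - I)%N).
have n_gt0 : (0 < n)%N by lia.
exists (\col_(k < n) f k); split => [i|j].
  rewrite /rowpart !vcoef_col n_gt0 /f /=.
  have [iI|Ii] := ltnP i.+1 I.
    have -> : (i.+1 < n)%N by lia.
    by rewrite valKd mul1r addrC subrK.
  rewrite mul0r addr0; congr a; apply: val_inj => /=.
  by have := ltn_ord i; lia.
rewrite /colpart vcoef_col; case: ltnP => Ij.
  by rewrite /f addn_eq0 (gtn_eqF I_gt0) ltnNge leq_addr /= addKn valKd.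
suff -> : j = last_col by [].
by apply: val_inj => /=; have := ltn_ord j; lia.
Qed.

(* Since #F = n, the rows of X_F are exactly the design rows of the edges. *)
Lemma design_matrix_ker (F : {set 'I_I * 'I_J}) v : #|F| = n ->
  design_matrix F *m v = 0 <-> (forall p, p \in F -> rowpart v p.1 + colpart v p.2 = 0).
Proof.
move=> cardF; pose p0 : 'I_I * 'I_J := (last_row, last_col).
have entry (k : 'I_n) : (design_matrix F *m v) k 0 = rowpart v (nth p0 (enum F) k).1
                                                    + colpart v (nth p0 (enum F) k).2.
  rewrite -design_row_mul !mxE; apply: eq_bigr => l _.
  by rewrite !mxE (nth_map p0) ?mxE // -cardE cardF.
split => [kerv p pF|rows0].
  have pk : (index p (enum F) < n)%N by rewrite -cardF cardE index_mem mem_enum.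
  have := congr1 (fun M : 'cV[rat]_n => M (Ordinal pk) 0) kerv.
  by rewrite entry /= nth_index ?mem_enum // mxE.
apply/matrixP => k z; rewrite ord1 entry mxE; apply: rows0.
by rewrite -mem_enum mem_nth // -cardE cardF.
Qed.

(* On a connected graph, a kernel vector has a row part that is constant and
   opposite to its column part; the last column part is 0, so all vanish. *)
Lemma connected_ker_trivial (F : {set 'I_I * 'I_J}) v : connected_on setT setT F ->
  (forall p, p \in F -> rowpart v p.1 + colpart v p.2 = 0) -> v = 0.
Proof.
move=> cF kerv.
have row_const i0 : [set i | rowpart v i == rowpart v i0] = setT
                    /\ [set j | colpart v j == - rowpart v i0] = setT.
  have cl : closed_pair F [set i | rowpart v i == rowpart v i0]
                          [set j | colpart v j == - rowpart v i0].
    apply/forall_inP => p /kerv /eqP; rewrite addr_eq0 !inE => /eqP ->.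
    by rewrite (eqr_oppLR (colpart v p.2)).
  have := forallP (forallP cF [set i | rowpart v i == rowpart v i0])
                  [set j | colpart v j == - rowpart v i0].
  rewrite !subsetT cl /= => /orP[/andP[/eqP e _]|/andP[/eqP -> /eqP ->] //].
  by move/setP: e => /(_ i0); rewrite !inE eqxx.
have row0 i0 : rowpart v i0 = 0.
  have [_ /setP /(_ last_col)] := row_const i0.
  by rewrite !inE colpart_last eq_sym oppr_eq0 => /eqP.
apply: rowcolpart_eq0 => // j.
have [_ /setP /(_ j)] := row_const last_row.
by rewrite !inE row0 oppr0 => /eqP.
Qed.

(* A disconnected graph has a nontrivial closed pair missing the last column
   (replace the pair by its complement if necessary). *)
Lemma closed_pair_avoiding_last (F : {set 'I_I * 'I_J}) : ~~ connected_on setT setT F ->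
  exists A B, [/\ closed_pair F A B, (A != set0) || (B != set0) & last_col \notin B].
Proof.
move/forallPn => [A] /forallPn [B]; rewrite negb_imply !subsetT /= negb_or.
move=> /and3P[cl nonempty nonfull].
have [lastB|] := boolP (last_col \in B); last by exists A, B; rewrite -negb_and.
exists (~: A), (~: B); split; last by rewrite inE lastB.
  by apply/forall_inP => p pF; rewrite !inE (eqP (forall_inP cl p pF)).
by move: nonfull; rewrite negb_and -!setTD !setD_eq0 !subTset.
Qed.

(* The indicator of a nontrivial closed pair gives a nonzero kernel vector. *)
Lemma disconnected_ker (F : {set 'I_I * 'I_J}) : ~~ connected_on setT setT F ->
  exists2 v, v != 0 & (forall p, p \in F -> rowpart v p.1 + colpart v p.2 = 0).
Proof.
move/closed_pair_avoiding_last => [A [B [cl nontrivial lastB]]].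
have [|v [rowv colv]] := @rowcolpart_surj (fun i => (i \in A)%:R) (fun j => - (j \in B)%:R).
  by rewrite (negbTE lastB) oppr0.
exists v.
  apply: contraTneq nontrivial => v0; rewrite negb_or !negbK.
  have vcoef0 l : vcoef v l = 0 by rewrite v0 /vcoef big1 // => k _; rewrite mxE mulr0.
  apply/andP; split; apply/eqP/setP => x; rewrite inE; apply/negbTE.
    by have := rowv x; rewrite /rowpart !vcoef0 mulr0 addr0; case: (x \in A) => // /eqP; rewrite oner_eq0.
  by have := colv x; rewrite /colpart vcoef0; case: (x \in B) => // /eqP; rewrite eq_sym oppr_eq0 oner_eq0.
by move=> p pF; rewrite rowv colv (eqP (forall_inP cl p pF)) subrr.
Qed.

Lemma unitmx_design_connected (F : {set 'I_I * 'I_J}) : #|F| = n ->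
  (design_matrix F \in unitmx) = connected_on setT setT F.
Proof.
move=> cardF; apply/idP/idP => [Xunit|cF].
  apply/negPn/negP => /disconnected_ker [v v0 kerv].
  by move: v0; rewrite ((unitmx_ker _).1 Xunit v ((design_matrix_ker v cardF).2 kerv)) eqxx.
by apply/unitmx_ker => v /(design_matrix_ker v cardF); exact: connected_ker_trivial.
Qed.

End DesignMatrix.

Definition connected_fraction (I J : nat) (R : {set 'I_I}) (C : {set 'I_J})
    (dA : 'I_I -> nat) (dB : 'I_J -> nat) (F : {set 'I_I * 'I_J}) : bool :=
  [&& F \subset setX R C, connected_on R C F,
      [forall i in R, marginA F i == dA i] & [forall j in C, marginB F j == dB j]].

Definition n_connected (I J : nat) (R : {set 'I_I}) (C : {set 'I_J})
    (dA : 'I_I -> nat) (dB : 'I_J -> nat) : nat :=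
  #|[set F | connected_fraction R C dA dB F]|.

Definition fact_prod (I : nat) (R : {set 'I_I}) (d : 'I_I -> nat) : nat :=
  \prod_(i in R) (d i).-1`!.

Definition decr_at (J : nat) (d : 'I_J -> nat) (j : 'I_J) : 'I_J -> nat :=
  fun k => if k == j then (d j).-1 else d k.

Lemma card_sepU1 (T : finType) (e : T) (A : {set T}) (P : pred T) :
  e \notin A -> #|[set p in e |: A | P p]| = (P e + #|[set p in A | P p]|)%N.
Proof.
move=> eA; case Pe: (P e).
  have -> : [set p in e |: A | P p] = e |: [set p in A | P p].
    by apply/setP => p; rewrite !inE; case: eqP => // ->; rewrite Pe.
  by rewrite cardsU1 inE (negbTE eA).
have -> // : [set p in e |: A | P p] = [set p in A | P p].
by apply/setP => p; rewrite !inE; case: eqP => // ->; rewrite Pe (negbTE eA).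
Qed.

Lemma marginA_U1 I J (F : {set 'I_I * 'I_J}) e k : e \notin F ->
  marginA (e |: F) k = ((e.1 == k) + marginA F k)%N.
Proof. exact: card_sepU1. Qed.

Lemma marginB_U1 I J (F : {set 'I_I * 'I_J}) e k : e \notin F ->
  marginB (e |: F) k = ((e.2 == k) + marginB F k)%N.
Proof. exact: card_sepU1. Qed.

Lemma marginA_D1 I J (F : {set 'I_I * 'I_J}) e k : e \in F ->
  marginA F k = ((e.1 == k) + marginA (F :\ e) k)%N.
Proof. by move=> eF; rewrite -{1}(setD1K eF) marginA_U1 ?setD11. Qed.

Lemma marginB_D1 I J (F : {set 'I_I * 'I_J}) e k : e \in F ->
  marginB F k = ((e.2 == k) + marginB (F :\ e) k)%N.
Proof. by move=> eF; rewrite -{1}(setD1K eF) marginB_U1 ?setD11. Qed.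

Definition flip_edge I J (p : 'I_I * 'I_J) : 'I_J * 'I_I := (p.2, p.1).

Lemma flip_edgeK I J : cancel (@flip_edge I J) (@flip_edge J I).
Proof. by case. Qed.

Definition transpose_fraction I J (F : {set 'I_I * 'I_J}) : {set 'I_J * 'I_I} :=
  (@flip_edge I J) @: F.

Lemma mem_transpose I J (F : {set 'I_I * 'I_J}) q :
  (q \in transpose_fraction F) = (flip_edge q \in F).
Proof.
apply/imsetP/idP => [[p pF ->]| qF]; first by rewrite flip_edgeK.
by exists (flip_edge q); rewrite ?flip_edgeK.
Qed.

Lemma transpose_fractionK I J : cancel (@transpose_fraction I J) (@transpose_fraction J I).
Proof. by move=> F; apply/setP => p; rewrite !mem_transpose flip_edgeK. Qed.

Lemma marginA_transpose I J (F : {set 'I_I * 'I_J}) j :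
  marginA (transpose_fraction F) j = marginB F j.
Proof.
rewrite /marginA /marginB -(card_imset _ (can_inj (@flip_edgeK I J))).
have -> // : [set q in transpose_fraction F | q.1 == j]
            = (@flip_edge I J) @: [set p in F | p.2 == j].
apply/setP => q; rewrite !inE mem_transpose.
apply/andP/imsetP => [[qF e]|[p]]; first by exists (flip_edge q); rewrite ?inE ?qF ?flip_edgeK.
by rewrite inE => /andP[pF e] ->; rewrite flip_edgeK.
Qed.

Lemma marginB_transpose I J (F : {set 'I_I * 'I_J}) i :
  marginB (transpose_fraction F) i = marginA F i.
Proof. by rewrite -{2}(transpose_fractionK F) marginA_transpose. Qed.

Lemma connected_fraction_transpose I J R C dA dB (F : {set 'I_I * 'I_J}) :
  connected_fraction R C dA dB F -> connected_fraction C R dB dA (transpose_fraction F).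
Proof.
case/and4P=> sF cF mA mB; apply/and4P; split.
- apply/subsetP => q; rewrite mem_transpose => /(subsetP sF).
  by case: q => a b; rewrite !inE andbC.
- apply/forallP => B; apply/forallP => A; apply/implyP => /and3P[sB sA clF].
  have clF' : closed_pair F A B.
    apply/forall_inP => p pF.
    by have := forall_inP clF (flip_edge p); rewrite mem_transpose flip_edgeK eq_sym; apply.
  have := forallP (forallP cF A) B; rewrite sA sB clF' /=.
  by case/orP=> /andP[-> ->]; rewrite ?orbT.
- by apply/forall_inP => j jC; rewrite marginA_transpose (forall_inP mB).
- by apply/forall_inP => i iR; rewrite marginB_transpose (forall_inP mA).
Qed.

Lemma n_connected_transpose I J (R : {set 'I_I}) (C : {set 'I_J}) dA dB :
  n_connected R C dA dB = n_connected C R dB dA.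
Proof.
rewrite /n_connected -(card_imset _ (can_inj (@transpose_fractionK I J))).
have -> // : [set G | connected_fraction C R dB dA G]
            = (@transpose_fraction I J) @: [set F | connected_fraction R C dA dB F].
apply/setP => G; rewrite inE; apply/idP/imsetP => [gG|[F]].
  by exists (transpose_fraction G); rewrite ?inE ?transpose_fractionK //
            connected_fraction_transpose.
by rewrite inE => /connected_fraction_transpose gF ->.
Qed.

Lemma card1_uniq (T : finType) (A : {set T}) x y :
  #|A| = 1%N -> x \in A -> y \in A -> x = y.
Proof. by move/eqP/cards1P => [z ->]; rewrite !inE => /eqP -> /eqP ->. Qed.

Section Leaf.
Variables (I J : nat) (R : {set 'I_I}) (C : {set 'I_J}).
Variables (dA : 'I_I -> nat) (dB : 'I_J -> nat) (i : 'I_I).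
Hypothesis iR : i \in R.
Hypothesis dAi : dA i = 1%N.

Lemma leaf_edge_uniq F j p : connected_fraction R C dA dB F ->
  (i, j) \in F -> p \in F -> p.1 = i -> p = (i, j).
Proof.
case/and4P=> _ _ /forall_inP mA _ ijF pF p1.
apply: (@card1_uniq _ [set p in F | p.1 == i]).
- by have := eqP (mA i iR); rewrite /marginA dAi.
- by rewrite inE pF p1 eqxx.
- by rewrite inE ijF eqxx.
Qed.

Lemma leaf_edge_exists F : connected_fraction R C dA dB F ->
  exists2 j, j \in C & (i, j) \in F.
Proof.
case/and4P=> sF _ /forall_inP mA _.
have /cards1P[x ex] : #|[set p in F | p.1 == i]| == 1%N.
  by have := eqP (mA i iR); rewrite /marginA dAi => ->.
have : x \in [set p in F | p.1 == i] by rewrite ex inE.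
rewrite inE => /andP[xF /eqP x1].
have := subsetP sF x xF; rewrite inE => /andP[_ x2].
by exists x.2 => //; rewrite -x1; case: x xF {ex x1 x2}.
Qed.

Lemma connected_remove_leaf (F : {set 'I_I * 'I_J}) j : (i, j) \in F ->
  (forall p, p \in F -> p.1 = i -> p = (i, j)) ->
  connected_on R C F -> connected_on (R :\ i) C (F :\ (i, j)).
Proof.
move=> ijF leafF cF; apply/forallP => A; apply/forallP => B.
apply/implyP => /and3P[sA sB clA].
have iA : i \notin A by apply/negP => /(subsetP sA); rewrite !inE eqxx.
(* Put i on the side of its neighbour j: this gives a closed pair for F. *)
have clF : forall A' : {set 'I_I}, (forall k, k != i -> (k \in A') = (k \in A)) ->
    (i \in A') = (j \in B) -> closed_pair F A' B.
  move=> A' eqA' iA'; apply/forall_inP => p pF.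
  have [->|pij] := eqVneq p (i, j); first by rewrite iA'.
  have p1 : p.1 != i by apply: contra_neq pij => /(leafF p pF).
  by rewrite eqA' //; apply: (forall_inP clA); rewrite !inE pij.
have AR : A \subset R by apply: subset_trans sA (subsetDl _ _).
case jB : (j \in B).
- have iAR : i |: A \subset R by rewrite subUset sub1set iR.
  have clU : closed_pair F (i |: A) B.
    by apply: clF => [k /negbTE ki|]; rewrite !inE ?ki ?eqxx ?jB.
  have := forallP (forallP cF (i |: A)) B; rewrite iAR sB clU /=.
  case/orP=> /andP[/eqP e /eqP ->]; first by have := setU11 i A; rewrite e inE.
  by rewrite -e setU1K // !eqxx orbT.
- have := forallP (forallP cF A) B.
  rewrite AR sB clF ?jB ?(negbTE iA) //= => /orP[/andP[-> ->] //|/andP[/eqP e _]].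
  by move: iA; rewrite e iR.
Qed.

Lemma connected_add_leaf (F : {set 'I_I * 'I_J}) j :
  j \in C -> (forall p, p \in F -> p.1 != i) -> connected_on (R :\ i) C F -> connected_on R C ((i, j) |: F).
Proof.
move=> jC nF cF; apply/forallP => A; apply/forallP => B.
apply/implyP => /and3P[sA sB clA].
have clF : closed_pair F (A :\ i) B.
  apply/forall_inP => p pF; rewrite !inE (nF p pF) /=.
  by apply: (forall_inP clA); rewrite inE pF orbT.
have /eqP ije := forall_inP clA (i, j) (setU11 _ _); rewrite /= in ije.
have := forallP (forallP cF (A :\ i)) B; rewrite clF sB setSD //=.
case/orP=> /andP[/eqP e /eqP eB]; apply/orP; [left|right];
  rewrite eB eqxx andbT; apply/eqP/setP => x; rewrite ?inE.
- have [->|xi] := eqVneq x i; first by rewrite ije eB inE.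
  by move/setP: e => /(_ x); rewrite !inE xi.
- have [->|xi] := eqVneq x i; first by rewrite ije eB jC iR.
  by move/setP: e => /(_ x); rewrite !inE xi.
Qed.

(* In a connected graph on at least two rows, the neighbour of a leaf is not
   itself a leaf (otherwise ({i}, {j}) would be a closed component). *)
Lemma leaf_neighbour_degree F j : (2 <= #|R|)%N ->
  connected_fraction R C dA dB F -> (i, j) \in F -> (2 <= dB j)%N.
Proof.
move=> R2 gF ijF; have leafF := leaf_edge_uniq gF ijF.
case/and4P: gF => sF cF _ /forall_inP mB.
have jC : j \in C by have := subsetP sF _ ijF; rewrite inE => /andP[].
have dBj_gt0 : (0 < dB j)%N.
  rewrite -(eqP (mB j jC)) card_gt0; apply/set0Pn; exists (i, j).
  by rewrite inE ijF eqxx.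
rewrite ltn_neqAle dBj_gt0 andbT; apply/eqP => dBj1.
have cl : closed_pair F [set i] [set j].
  apply/forall_inP => p pF; rewrite !inE; apply/eqP; apply/idP/idP => [/eqP p1|/eqP p2].
    by rewrite (leafF p pF p1).
  suff -> : p = (i, j) by [].
  apply: (@card1_uniq _ [set p in F | p.2 == j]).
  + by have := eqP (mB j jC); rewrite /marginB -dBj1.
  + by rewrite inE pF p2 eqxx.
  + by rewrite inE ijF eqxx.
have := forallP (forallP cF [set i]) [set j].
rewrite cl !sub1set iR jC /= => /orP[/andP[/eqP e _]|/andP[/eqP e _]].
  by have := set11 i; rewrite e inE.
by move: R2; rewrite -e cards1.
Qed.

Lemma leaf_remove F j : connected_fraction R C dA dB F -> (i, j) \in F ->
  connected_fraction (R :\ i) C dA (decr_at dB j) (F :\ (i, j)).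
Proof.
move=> gF ijF; have leafF := leaf_edge_uniq gF ijF.
case/and4P: gF => sF cF /forall_inP mA /forall_inP mB.
apply/and4P; split.
- apply/subsetP => p; rewrite !inE => /andP[pij pF].
  have := subsetP sF p pF; rewrite inE => /andP[-> ->]; rewrite !andbT.
  by apply: contra_neq pij => /(leafF p pF).
- exact: connected_remove_leaf.
- apply/forall_inP => k; rewrite !inE => /andP[ki kR].
  by have := marginA_D1 k ijF; rewrite (eqP (mA k kR)) eq_sym (negbTE ki) add0n => ->.
- apply/forall_inP => k kC; have := marginB_D1 k ijF.
  rewrite (eqP (mB k kC)) /decr_at; have [->|_] := eqVneq k j.
    by rewrite add1n => ->.
  by rewrite add0n => ->.
Qed.

Lemma leaf_add F j : j \in C -> (0 < dB j)%N ->
  connected_fraction (R :\ i) C dA (decr_at dB j) F ->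
  (i, j) \notin F /\ connected_fraction R C dA dB ((i, j) |: F).
Proof.
move=> jC dBj /and4P[sF cF /forall_inP mA /forall_inP mB].
have nF p : p \in F -> p.1 != i.
  by move=> /(subsetP sF); rewrite !inE => /andP[/andP[]].
have ijF : (i, j) \notin F by apply/negP => /nF; rewrite eqxx.
split=> //; apply/and4P; split.
- apply/subsetP => p; rewrite in_setU1 => /orP[/eqP ->|/(subsetP sF)].
    by rewrite !inE iR jC.
  by rewrite !inE => /andP[/andP[_ ->] ->].
- exact: connected_add_leaf.
- apply/forall_inP => k kR; rewrite marginA_U1 //=.
  have [<-|ik] := eqVneq i k.
    rewrite dAi; suff -> : marginA F i = 0%N by [].
    apply/eqP; rewrite cards_eq0; apply/eqP/setP => p; rewrite !inE.
    by apply/negP => /andP[/nF /negbTE ->].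
  by rewrite (eqP (mA k _)) // !inE eq_sym ik.
- apply/forall_inP => k kC; rewrite marginB_U1 //= (eqP (mB k kC)) /decr_at.
  by have [->|_] := eqVneq k j; rewrite ?add1n ?prednK.
Qed.

Lemma card_leaf_edge j : (2 <= #|R|)%N -> j \in C -> (0 < dB j)%N ->
  #|[set F | connected_fraction R C dA dB F & (i, j) \in F]|
  = if (2 <= dB j)%N then n_connected (R :\ i) C dA (decr_at dB j) else 0%N.
Proof.
move=> R2 jC dBj; have [dBj2|dBj1] := leqP 2 (dB j); last first.
  apply/eqP; rewrite cards_eq0; apply/eqP/setP => F; rewrite !inE.
  apply/negP => /andP[gF ijF].
  by have := leaf_neighbour_degree R2 gF ijF; rewrite leqNgt dBj1.
have -> : [set F | connected_fraction R C dA dB F & (i, j) \in F] =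
    (fun F' => (i, j) |: F') @: [set F' | connected_fraction (R :\ i) C dA (decr_at dB j) F'].
  apply/setP => F; rewrite !inE; apply/andP/imsetP => [[gF ijF]|[F']].
    by exists (F :\ (i, j)); rewrite ?inE ?leaf_remove ?setD1K.
  by rewrite inE => /(leaf_add jC dBj)[_ gF] ->; rewrite gF setU11.
rewrite card_in_imset // => F1 F2; rewrite !inE => g1 g2 e.
have [n1 _] := leaf_add jC dBj g1; have [n2 _] := leaf_add jC dBj g2.
by rewrite -(setU1K n1) e setU1K.
Qed.

(* Every connected fraction contains exactly one edge at the leaf i. *)
Lemma n_connected_by_leaf_edge :
  n_connected R C dA dB
  = (\sum_(j in C) #|[set F | connected_fraction R C dA dB F & (i, j) \in F]|)%N.
Proof.
set S := [set F | connected_fraction R C dA dB F].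
transitivity (\sum_(F in S) \sum_(j in C) ((i, j) \in F : nat))%N.
  rewrite /n_connected -/S -sum1_card; apply: eq_bigr => F; rewrite inE => gF.
  have [j0 j0C ij0] := leaf_edge_exists gF.
  rewrite (bigD1 j0) //= ij0 big1 // => j /andP[_ jj0].
  apply/eqP; rewrite eqb0; apply/negP => ijF.
  by have [/eqP] := leaf_edge_uniq gF ij0 ijF erefl; rewrite (negbTE jj0).
rewrite exchange_big; apply: eq_bigr => j _.
rewrite -sum1_card [RHS]big_mkcond [LHS]big_mkcond; apply: eq_bigr => F _.
by rewrite !inE; case: connected_fraction; case: ((i, j) \in F).
Qed.

End Leaf.

Definition degree_data (I J : nat) (R : {set 'I_I}) (C : {set 'I_J})
    (dA : 'I_I -> nat) (dB : 'I_J -> nat) : Prop :=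
  [/\ (0 < #|R|)%N, (0 < #|C|)%N, {in R, forall i, 0 < dA i}%N,
      {in C, forall j, 0 < dB j}%N &
      (\sum_(i in R) dA i = #|R| + #|C| - 1)%N /\
      (\sum_(j in C) dB j = #|R| + #|C| - 1)%N].

Definition count_formula (I J : nat) (R : {set 'I_I}) (C : {set 'I_J})
    (dA : 'I_I -> nat) (dB : 'I_J -> nat) : Prop :=
  (n_connected R C dA dB * fact_prod R dA * fact_prod C dB
   = (#|C| - 1)`! * (#|R| - 1)`!)%N.

Lemma degree_data_transpose I J (R : {set 'I_I}) (C : {set 'I_J}) dA dB :
  degree_data R C dA dB -> degree_data C R dB dA.
Proof. by case=> R0 C0 pA pB [sA sB]; split=> //; rewrite addnC. Qed.

Lemma count_formula_transpose I J (R : {set 'I_I}) (C : {set 'I_J}) dA dB :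
  count_formula C R dB dA -> count_formula R C dA dB.
Proof. by rewrite /count_formula n_connected_transpose mulnAC [RHS]mulnC. Qed.

Lemma sum_pred (T : finType) (C : {pred T}) (d : T -> nat) :
  {in C, forall j, 0 < d j}%N ->
  (\sum_(j in C) (d j).-1 + #|C| = \sum_(j in C) d j)%N.
Proof.
move=> pos; rewrite -sum1_card -big_split /=; apply: eq_bigr => j jC.
by rewrite addn1 prednK // pos.
Qed.

Lemma fact_prodD1 I (R : {set 'I_I}) d i : i \in R ->
  fact_prod R d = ((d i).-1`! * fact_prod (R :\ i) d)%N.
Proof. exact: big_setD1. Qed.

Lemma fact_prod_decr I (R : {set 'I_I}) d i : i \in R -> (2 <= d i)%N ->
  fact_prod R d = ((d i).-1 * fact_prod R (decr_at d i))%N.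
Proof.
move=> iR di2; rewrite !(fact_prodD1 _ iR) mulnA /decr_at eqxx.
congr (_ * _)%N; last by apply: eq_bigr => k; rewrite !inE => /andP[/negbTE -> _].
by case: (d i) di2 => [|[|k]] //= _; rewrite factS.
Qed.

Lemma sum_decr_at I (R : {set 'I_I}) d i : i \in R -> (0 < d i)%N ->
  (\sum_(k in R) decr_at d i k = (\sum_(k in R) d k).-1)%N.
Proof.
move=> iR di; rewrite !(bigD1 i iR) /= /decr_at eqxx.
rewrite (eq_bigr d) => [|k /andP[_ /negbTE -> //]].
by case: (d i) di.
Qed.

Lemma degree_data_remove_leaf I J (R : {set 'I_I}) (C : {set 'I_J}) dA dB i j :
  degree_data R C dA dB -> i \in R -> dA i = 1%N -> (2 <= #|R|)%N ->
  j \in C -> (2 <= dB j)%N -> degree_data (R :\ i) C dA (decr_at dB j).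
Proof.
move=> [_ C0 pA pB [sA sB]] iR dAi R2 jC dBj2.
have cardR : #|R| = (#|R :\ i|).+1 by rewrite (cardsD1 i R) iR.
have sAi : (1 + \sum_(k in R :\ i) dA k = #|R| + #|C| - 1)%N.
  by rewrite -sA (big_setD1 i iR) dAi.
split.
- by rewrite -ltnS -cardR.
- exact: C0.
- by move=> k; rewrite !inE => /andP[_ /pA].
- by move=> k kC; rewrite /decr_at; case: eqP => _; [rewrite -ltnS prednK ?(pB j) | apply: pB].
split.
- by move: sAi; rewrite cardR; lia.
- by rewrite sum_decr_at ?sB ?cardR //; lia.
Qed.

(* The induction step at a leaf row i: summing over the neighbour j of i,
   N(R, C) * ∏ = Σ_j (dB j - 1) (|C|-1)! (|R|-2)! = (|C|-1)! (|R|-1)!, as the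
   degrees dB j - 1 add up to |R| - 1. *)
Lemma count_formula_leaf I J (R : {set 'I_I}) (C : {set 'I_J}) dA dB i :
  degree_data R C dA dB -> i \in R -> dA i = 1%N -> (2 <= #|R|)%N ->
  (forall j, j \in C -> (2 <= dB j)%N -> count_formula (R :\ i) C dA (decr_at dB j)) ->
  count_formula R C dA dB.
Proof.
move=> [_ _ _ pB [_ sB]] iR dAi R2 IH.
have cardR : #|R :\ i| = #|R|.-1 by rewrite (cardsD1 i R) iR.
have leafA : fact_prod R dA = fact_prod (R :\ i) dA.
  by rewrite (fact_prodD1 _ iR) dAi mul1n.
have edge_term j : j \in C ->
    (#|[set F | connected_fraction R C dA dB F & (i, j) \in F]|
       * fact_prod R dA * fact_prod C dB
     = (dB j).-1 * ((#|C| - 1)`! * (#|R| - 2)`!))%N.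
  move=> jC; rewrite card_leaf_edge ?pB //.
  have [dBj2|dBj1] := leqP 2 (dB j); last by rewrite (_ : (dB j).-1 = 0%N) //; lia.
  rewrite leafA (fact_prod_decr jC dBj2).
  have := IH j jC dBj2; rewrite /count_formula cardR (_ : (#|R|.-1 - 1 = #|R| - 2)%N); last by lia.
  by move=> <-; ring.
rewrite /count_formula (n_connected_by_leaf_edge _ _ iR dAi) !big_distrl /=.
rewrite (eq_bigr _ edge_term) -big_distrl /=.
have -> : (\sum_(j in C) (dB j).-1 = (#|R| - 2).+1)%N.
  by have := sum_pred pB; rewrite sB; lia.
by rewrite (_ : (#|R| - 1 = (#|R| - 2).+1)%N) ?factS; [ring | lia].
Qed.

(* A single row and column: the only fraction is the single edge. *)
Lemma count_formula_single I J (R : {set 'I_I}) (C : {set 'I_J}) dA dB :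
  #|R| = 1%N -> #|C| = 1%N -> degree_data R C dA dB -> count_formula R C dA dB.
Proof.
move=> /eqP/cards1P[i ->] /eqP/cards1P[j ->] [_ _ _ _ []].
rewrite !big_set1 !cards1 /= => dAi dBj.
rewrite /count_formula /n_connected /fact_prod !big_set1 !cards1 dAi dBj.
have single_margin (P : pred ('I_I * 'I_J)) : P (i, j) ->
    #|[set p in [set (i, j)] | P p]| = 1%N.
  move=> Pij; rewrite (_ : [set p in [set (i, j)] | P p] = [set (i, j)]) ?cards1 //.
  by apply/setP => p; rewrite !inE; case: eqP => // ->.
have setXij : setX [set i] [set j] = [set (i, j)].
  by apply/setP => -[a b]; rewrite !inE xpair_eqE.
have -> : [set F | connected_fraction [set i] [set j] dA dB F] = [set [set (i, j)]].
  apply/setP => F; rewrite !inE; apply/idP/idP => [/and4P[sF _ mA _]|/eqP ->].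
    move: sF; rewrite setXij subset1 => /orP[//|/eqP F0].
    have := forall_inP mA i (set11 i); rewrite F0 dAi /marginA.
    by rewrite (_ : [set p in set0 | p.1 == i] = set0) ?cards0 // -setP => p; rewrite !inE.
  apply/and4P; split.
  - by rewrite setXij.
  - apply/forallP => A; apply/forallP => B; apply/implyP => /and3P[sA sB cl].
    have := forall_inP cl (i, j) (set11 _).
    by move: sA sB; rewrite !subset1 => /orP[]/eqP-> /orP[]/eqP->; rewrite ?inE ?eqxx ?orbT.
  - by apply/forall_inP => k; rewrite inE => /eqP ->; rewrite /marginA single_margin ?dAi.
  - by apply/forall_inP => k; rewrite inE => /eqP ->; rewrite /marginB single_margin ?dBj.
by rewrite cards1.
Qed.

(* Unless |R| = |C| = 1, some vertex is a leaf on a side with at least two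
   vertices: otherwise each degree sum would be at least twice the number of
   vertices on its side, exceeding |R| + |C| - 1. *)
Lemma degree_data_leaf I J (R : {set 'I_I}) (C : {set 'I_J}) dA dB :
  degree_data R C dA dB -> ~~ ((#|R| == 1%N) && (#|C| == 1%N)) ->
  (exists i, [/\ i \in R, dA i = 1%N & 2 <= #|R|]%N) \/
  (exists j, [/\ j \in C, dB j = 1%N & 2 <= #|C|]%N).
Proof.
move=> [R0 C0 pA pB [sA sB]] not_single.
have [/exists_inP[i iR /andP[/eqP dAi R2]]|noA] :=
  boolP [exists i in R, (dA i == 1%N) && (2 <= #|R|)%N]; first by left; exists i.
have [/exists_inP[j jC /andP[/eqP dBj C2]]|noB] :=
  boolP [exists j in C, (dB j == 1%N) && (2 <= #|C|)%N]; first by right; exists j.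
exfalso.
have large_sum (T : finType) (D : {set T}) (d : T -> nat) : {in D, forall k, 0 < d k}%N ->
    ~~ [exists k in D, (d k == 1%N) && (2 <= #|D|)%N] ->
    (2 <= #|D| -> 2 * #|D| <= \sum_(k in D) d k)%N.
  move=> pos noleaf D2; rewrite mulnC -sum_nat_const; apply: leq_sum => k kD.
  rewrite ltn_neqAle pos // andbT; apply: contraNneq noleaf => dk1.
  by apply/exists_inP; exists k; rewrite // -dk1 eqxx D2.
have := large_sum _ _ _ pA noA; have := large_sum _ _ _ pB noB.
move: not_single; rewrite sA sB; lia.
Qed.

(* The tree-counting identity, by induction on |R| + |C|, removing a leaf row
   or (after transposition) a leaf column. *)
Lemma count_formula_holds I J (R : {set 'I_I}) (C : {set 'I_J}) dA dB :
  degree_data R C dA dB -> count_formula R C dA dB.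
Proof.
move: {2}(#|R| + #|C|)%N (leqnn (#|R| + #|C|)) => n.
elim: n I J R C dA dB => [|n IH] I J R C dA dB size_n D.
  by case: D => R0 C0 *; lia.
have [/andP[/eqP R1 /eqP C1]|not_single] := boolP ((#|R| == 1%N) && (#|C| == 1%N)).
  exact: count_formula_single.
case: (degree_data_leaf D not_single) => [[i [iR dAi R2]]|[j [jC dBj C2]]].
  apply: (count_formula_leaf D iR dAi R2) => j jC dBj2.
  apply: IH; last exact: degree_data_remove_leaf.
  by move: size_n; rewrite (cardsD1 i R) iR; lia.
apply: count_formula_transpose.
apply: (count_formula_leaf (degree_data_transpose D) jC dBj C2) => i iR dAi2.
apply: IH; last exact: (degree_data_remove_leaf (degree_data_transpose D)).
by move: size_n; rewrite (cardsD1 j C) jC; lia.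
Qed.

Lemma card_sum_marginA I J (F : {set 'I_I * 'I_J}) : #|F| = (\sum_(i < I) marginA F i)%N.
Proof.
rewrite -sum1_card (partition_big (fun p : 'I_I * 'I_J => p.1) xpredT) //=.
by apply: eq_bigr => i _; rewrite /marginA -sum1_card; apply: eq_bigl => p; rewrite !inE.
Qed.

Lemma saturated_margins_connected I J (mA : 'I_I -> nat) (mB : 'I_J -> nat)
    (F : {set 'I_I * 'I_J}) :
  (0 < I)%N -> (0 < J)%N -> (\sum_(i < I) mA i)%N = (I + J - 1)%N ->
  saturated F && [forall i, marginA F i == mA i] && [forall j, marginB F j == mB j]
  = connected_fraction setT setT mA mB F.
Proof.
move=> I_gt0 J_gt0 sumA.
have forallT (T : finType) (P : pred T) : [forall x in [set: T], P x] = [forall x, P x].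
  by apply: eq_forallb => x; rewrite in_setT.
rewrite /saturated /connected_fraction !forallT.
have -> : F \subset setX setT setT by apply/subsetP => p _; rewrite !inE.
have [margA|_] := boolP [forall i, marginA F i == mA i]; last by rewrite /= !andbF.
have cardF : #|F| = (I + J - 1)%N.
  by rewrite card_sum_marginA -sumA; apply: eq_bigr => i _; apply/eqP/(forallP margA).
by rewrite cardF eqxx unitmx_design_connected //= andbT.
Qed.

(* n! is divisible by ∏ k! whenever ∑ k = n, so the multinomial coefficient is exact. *)
Lemma prod_fact_dvd (s : seq nat) : (\prod_(k <- s) k`! %| (\sum_(k <- s) k)`!)%N.
Proof.
elim: s => [|k s IH]; first by rewrite !big_nil.
rewrite !big_cons -(bin_fact (leq_addr (\sum_(j <- s) j) k)) addKn.
by apply: dvdn_mull; apply: dvdn_mul.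
Qed.

Lemma multinomial_fact_prod n I (d : 'I_I -> nat) : (forall j, 0 < d j)%N ->
  (\sum_(j < I) d j = n + I)%N ->
  (multinomial n [seq (d j).-1 | j <- enum 'I_I] * fact_prod setT d = n`!)%N.
Proof.
move=> pos sum_d.
have prodE : \prod_(k <- [seq (d j).-1 | j <- enum 'I_I]) k`! = fact_prod setT d.
  by rewrite big_map big_enum /fact_prod; apply: eq_bigl => j; rewrite !inE.
have sumE : (\sum_(k <- [seq (d j).-1 | j <- enum 'I_I]) k = n)%N.
  have := @sum_pred _ 'I_I d (fun j _ => pos j).
  rewrite big_map big_enum card_ord (eq_bigl xpredT (fun j => d j)) // sum_d.
  by move/eqP; rewrite eqn_add2r => /eqP.
by rewrite /multinomial -prodE divnK // -sumE prod_fact_dvd.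
Qed.

Lemma fact_prod_gt0 I (R : {set 'I_I}) (d : 'I_I -> nat) : (0 < fact_prod R d)%N.
Proof. by rewrite /fact_prod prodn_gt0 // => i; rewrite fact_gt0. Qed.

Unset Implicit Arguments.
Theorem proposition4p5 (I J : nat) (mA : 'I_I -> nat) (mB : 'I_J -> nat) :
  (2 <= I)%N -> (2 <= J)%N ->
  (forall i, (0 < mA i)%N) -> (forall j, (0 < mB j)%N) ->
  (\sum_(i < I) mA i)%N = (I + J - 1)%N ->
  (\sum_(j < J) mB j)%N = (I + J - 1)%N ->
  #|[set F : {set 'I_I * 'I_J} | saturated F
        && [forall i, marginA F i == mA i]
        && [forall j, marginB F j == mB j]]|
  = (multinomial (I - 1) [seq (mB j).-1 | j <- enum 'I_J]
     * multinomial (J - 1) [seq (mA i).-1 | i <- enum 'I_I])%N.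
Proof.
move=> I2 J2 pA pB sA sB.
have sumT (K : nat) (d : 'I_K -> nat) : (\sum_(k in [set: 'I_K]) d k = \sum_(k < K) d k)%N.
  by apply: eq_bigl => k; rewrite in_setT.
have D : degree_data [set: 'I_I] [set: 'I_J] mA mB.
  by split; rewrite ?sumT ?cardsT ?card_ord //; lia.
have := count_formula_holds D; rewrite /count_formula !cardsT !card_ord => countE.
have -> : [set F : {set 'I_I * 'I_J} | saturated F && [forall i, marginA F i == mA i]
                                       && [forall j, marginB F j == mB j]]
          = [set F | connected_fraction setT setT mA mB F].
  by apply/setP => F; rewrite !inE saturated_margins_connected //; lia.
have multB := @multinomial_fact_prod (I - 1) J mB pB ltac:(lia).
have multA := @multinomial_fact_prod (J - 1) I mA pA ltac:(lia).
apply/eqP; rewrite -(eqn_pmul2r (fact_prod_gt0 setT mA)) -(eqn_pmul2r (fact_prod_gt0 setT mB)).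
by rewrite -/(n_connected _ _ _ _) countE -multA -multB; apply/eqP; ring.
Qed.
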